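(* Let $X$ be a complex K3 surface, let $K_{\mathrm{num}}(X)$ be its numerical Grothendieck group equipped with the Mukai pairing $(\,,\,)$, and let $s=v(\mathcal{E})$ be the Mukai vector of a spherical object $\mathcal{E}\in D^b(X)$. Let $s^\perp_+\subset K_{\mathrm{num}}(X)\otimes\mathbb{R}$ be the set of classes $v$ with $(v,s)=0$ and $v^2>0$. Then, up to rescaling, the set of integral classes $v\in s^\perp_+$ such that $2v^2$ is not a square is dense in $s^\perp_+$; that is, the set of positive real multiples of such integral classes is dense in $s^\perp_+$.
   Context: $K_{\mathrm{num}}(X)$ is identified with the algebraic Mukai lattice $H^0(X,\mathbb{Z})\oplus\mathrm{NS}(X)\oplus H^4(X,\mathbb{Z})$ via the Mukai vector $v(E)=\mathrm{ch}(E)\sqrt{\mathrm{td}(X)}$, with pairing $((r_1,c_1,m_1),(r_2,c_2,m_2))=c_1c_2-r_1m_2-r_2m_1$; it has signature $(2,\rho)$ where $\rho$ is the Picard rank. A spherical object satisfies $\mathbf{R}\mathrm{Hom}(\mathcal{E},\mathcal{E})\cong\mathbb{C}\oplus\mathbb{C}[-2]$; $v^2$ means $(v,v)$; ''square'' means square of an integer. *)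

From HB Require Import structures.
From mathcomp Require Import all_boot all_order all_algebra.
From mathcomp Require Import reals.
Set Implicit Arguments. Unset Strict Implicit. Unset Printing Implicit Defensive.
Import Order.TTheory GRing.Theory Num.Theory.
Local Open Scope ring_scope.

(* Algebraic Mukai lattice H^0 ⊕ NS(X) ⊕ H^4 with NS(X) = Z^n carrying the
   intersection form given by the Gram matrix G. *)
Definition mvec (T : Type) (n : nat) := (T * 'rV[T]_n * T)%type.

Definition mrank {T n} (v : mvec T n) : T := v.1.1.
Definition mdiv {T n} (v : mvec T n) : 'rV[T]_n := v.1.2.
Definition mdeg {T n} (v : mvec T n) : T := v.2.

Definition mukai {T : comRingType} {n} (G : 'M[T]_n) (v w : mvec T n) : T :=
  (mdiv v *m G *m (mdiv w)^T) 0 0 - mrank v * mdeg w - mrank w * mdeg v.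

Definition mreal (R : realType) {n} (v : mvec int n) : mvec R n :=
  ((mrank v)%:~R, map_mx (fun z : int => z%:~R) (mdiv v), (mdeg v)%:~R).

Definition mscale (R : realType) {n} (a : R) (v : mvec R n) : mvec R n :=
  (a * mrank v, a *: mdiv v, a * mdeg v).

(* coordinatewise eps-closeness (product topology on R^(n+2)) *)
Definition mclose (R : realType) {n} (eps : R) (v w : mvec R n) : Prop :=
  [/\ `|mrank v - mrank w| < eps,
      forall i, `|mdiv v 0 i - mdiv w 0 i| < eps
    & `|mdeg v - mdeg w| < eps].

(* NS(X) has signature (1, n-1): the Gram matrix is congruent over R to
   diag(1, -1, ..., -1). *)
Definition hyperbolic_signature (R : realType) {n} (G : 'M[int]_n) : Prop :=
  exists P : 'M[R]_n, P \in unitmx /\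
    P *m map_mx (fun z : int => z%:~R) G *m P^T
    = diag_mx (\row_(i < n) (if val i == 0%N then 1 else -1)).

Definition even_lattice {n} (G : 'M[int]_n) : Prop :=
  G^T = G /\ forall i, (2 %| G i i)%Z.

Definition is_int_square (z : int) : Prop := exists k : int, z = k ^+ 2.

From HB Require Import structures.
From mathcomp Require Import all_boot all_order all_algebra.
From mathcomp Require Import reals.
From mathcomp Require Import ring lra zify.
From Stdlib Require Import Classical_Prop.
Import Order.TTheory GRing.Theory Num.Theory.
Set Implicit Arguments. Unset Strict Implicit. Unset Printing Implicit Defensive.
Local Open Scope ring_scope.

(* Round N x to an integral class w and push it into s^perp by w |-> 2 w + (w, s) s, which
   stays integral because s^2 = -2; for large N this gives an integral u in s^perp with
   u/2N close to x, and u^2 > 0 because the positive cone is open.  If 2 u^2 happens to be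
   a square 2U = c^2, take v = P u + t with t integral in s^perp and U t^2 <> (u, t)^2.
   For V = v^2 one has 2U 2V = (2UP + 2B)^2 + 4(UT - B^2) with B = (u, t) and T = t^2, so
   for P large 2V cannot be a square, while v/P stays close to u.  If no such t existed,
   the Mukai form would have rank at most 2, which is impossible: it contains the
   hyperbolic plane H^0 + H^4 and is nonzero on the orthogonal summand NS(X).  Only the
   symmetry of NS(X) and NS(X) <> 0 are used. *)

HB.instance Definition _ (T : comNzRingType) n :=
  GRing.Lmodule.copy (mvec T n) (T^o * 'rV[T]_n * T^o)%type.

Section MukaiForm.
Variables (T : comNzRingType) (n : nat) (G : 'M[T]_n).
Implicit Types (u v w : mvec T n) (a : T).

Lemma mukaiDl u v w : mukai G (u + v) w = mukai G u w + mukai G v w.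
Proof. by rewrite /mukai /mrank /mdiv /mdeg /= mulmxDl mulmxDl mxE; ring. Qed.

Lemma mukaiDr u v w : mukai G u (v + w) = mukai G u v + mukai G u w.
Proof. by rewrite /mukai /mrank /mdiv /mdeg /= linearD mulmxDr mxE; ring. Qed.

Lemma mukaiZl a v w : mukai G (a *: v) w = a * mukai G v w.
Proof.
by rewrite /mukai /mrank /mdiv /mdeg /= -!scalemxAl mxE -2![_ *: _]/(_ * _); ring.
Qed.

Lemma mukaiZr a v w : mukai G v (a *: w) = a * mukai G v w.
Proof.
by rewrite /mukai /mrank /mdiv /mdeg /= linearZ -scalemxAr mxE -2![_ *: _]/(_ * _); ring.
Qed.

Lemma mukai_H0l w : mukai G ((1, 0, 0) : mvec T n) w = - mdeg w.
Proof. by rewrite /mukai /mrank /mdiv /mdeg /= !mul0mx mxE; ring. Qed.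

Lemma mukai_H4l w : mukai G ((0, 0, 1) : mvec T n) w = - mrank w.
Proof. by rewrite /mukai /mrank /mdiv /mdeg /= !mul0mx mxE; ring. Qed.

Lemma mukai_NSl g w : mukai G ((0, g, 0) : mvec T n) w = (g *m G *m (mdiv w)^T) 0 0.
Proof. by rewrite /mukai /mrank /mdiv /mdeg /=; ring. Qed.

(* Twice the orthogonal projection of [b] onto [s^perp] when [s^2 = -2], which keeps
   integral classes integral. *)
Definition perp2 s b : mvec T n := 2 *: b + mukai G b s *: s.

Fact perp2_is_linear s : linear (perp2 s).
Proof.
move=> a v w; rewrite /perp2 mukaiDl mukaiZl (scalerDl s) !scalerDr !scalerA.
by rewrite [2 * a]mulrC addrACA.
Qed.

HB.instance Definition _ s :=
  GRing.isLinear.Build T (mvec T n) (mvec T n) _ (perp2 s) (perp2_is_linear s).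

Lemma perp2_orth s x : mukai G x s = 0 -> perp2 s x = 2 *: x.
Proof. by move=> xs; rewrite /perp2 xs scale0r addr0. Qed.

Lemma mukai_perp2l s b : mukai G s s = -2 -> mukai G (perp2 s b) s = 0.
Proof. by move=> ss; rewrite mukaiDl !mukaiZl ss; ring. Qed.

Hypothesis symG : G^T = G.

Lemma mukaiC v w : mukai G v w = mukai G w v.
Proof.
rewrite /mukai.
have -> : (mdiv v *m G *m (mdiv w)^T) 0 0 = (mdiv v *m G *m (mdiv w)^T)^T 0 0.
  by rewrite [RHS]mxE.
by rewrite !trmx_mul trmxK symG mulmxA; ring.
Qed.

Lemma mukai_sqrD v w :
  mukai G (v + w) (v + w) = mukai G v v + 2 * mukai G v w + mukai G w w.
Proof. by rewrite mukaiDl !mukaiDr [mukai G w v]mukaiC; ring. Qed.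

End MukaiForm.

Lemma rank2_form_orth_hyperbolic_eq0 (T : idomainType) (V : Type)
    (beta : V -> V -> T) (phi psi : V -> T) (c p q : T) (e f g g' : V) :
  c != 0 -> (forall x y, c * beta x y = p * phi x * phi y + q * psi x * psi y) ->
  beta e e = 0 -> beta f f = 0 -> beta e f * beta f e != 0 ->
  beta e g' = 0 -> beta f g' = 0 -> beta g e = 0 -> beta g f = 0 ->
  beta g g' = 0.
Proof.
move=> c_neq0 rank2 ee ff ef_neq0 eg' fg' ge gf.
pose m x y := c * beta x y.
pose minor x1 x2 x3 y1 y2 y3 := m x1 y1 * (m x2 y2 * m x3 y3 - m x2 y3 * m x3 y2)
  - m x1 y2 * (m x2 y1 * m x3 y3 - m x2 y3 * m x3 y1)
  + m x1 y3 * (m x2 y1 * m x3 y2 - m x2 y2 * m x3 y1).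
(* [m] has rank at most 2, so its 3x3 minors vanish; on the rows [e, f, g] and columns
   [e, f, g'] the hyperbolic pair [e, f] reduces the minor to [- c^3 (e.f) (f.e) (g.g')]. *)
have minor_eq0 : minor e f g e f g' = 0 by rewrite /minor /m !rank2; ring.
have : minor e f g e f g' = - (c ^+ 3 * (beta e f * beta f e) * beta g g').
  by rewrite /minor /m ee ff eg' fg' ge gf; ring.
rewrite minor_eq0 => /eqP; rewrite eq_sym oppr_eq0 mulf_eq0 mulf_eq0 expf_eq0.
by rewrite (negbTE c_neq0) (negbTE ef_neq0) /= => /eqP.
Qed.

Section SphericalClass.
Variables (T : idomainType) (n : nat) (G : 'M[T]_n) (s u : mvec T n).
Hypotheses (symG : G^T = G) (two_neq0 : 2 != 0 :> T).
Hypotheses (ss : mukai G s s = -2) (us : mukai G u s = 0).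
Hypothesis proportional : forall t, mukai G t s = 0 ->
  mukai G u u * mukai G t t = mukai G u t ^+ 2.

Lemma mukai_rank2_of_proportional x y :
  2 * mukai G u u * mukai G x y
  = 2 * mukai G u x * mukai G u y + - mukai G u u * mukai G x s * mukai G y s.
Proof.
(* [2 * Q b] is the defect of [proportional] at [perp2 s b]; polarize [Q = 0]. *)
pose Q b := mukai G u u * (2 * mukai G b b + mukai G b s ^+ 2) - 2 * mukai G u b ^+ 2.
have Q0 b : Q b = 0.
  have := proportional (mukai_perp2l b ss).
  rewrite /perp2 mukai_sqrD // !(mukaiZl, mukaiZr, mukaiDr) ss us.
  move/eqP; rewrite -subr_eq0 => /eqP h; apply: (mulfI two_neq0).
  by rewrite mulr0 -h /Q; ring.
have : Q (x + y) - Q x - Q y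
    = 2 * (2 * mukai G u u * mukai G x y
           - (2 * mukai G u x * mukai G u y + - mukai G u u * mukai G x s * mukai G y s)).
  by rewrite /Q mukai_sqrD // !mukaiDl mukaiDr; ring.
rewrite !Q0 !subr0 => /esym /eqP; rewrite mulf_eq0 (negbTE two_neq0) subr_eq0.
exact: eqP.
Qed.

Lemma gram_eq0_of_proportional : mukai G u u != 0 -> G = 0.
Proof.
move=> uu_neq0; apply/matrixP => i j; rewrite mxE.
pose ns (g : 'rV[T]_n) : mvec T n := (0, g, 0).
have -> : G i j = mukai G (ns (delta_mx 0 i)) (ns (delta_mx 0 j)).
  by rewrite mukai_NSl -rowE trmx_delta -colE !mxE.
apply: (rank2_form_orth_hyperbolic_eq0 (e := (1, 0, 0)) (f := (0, 0, 1))
  (mulf_neq0 two_neq0 uu_neq0) mukai_rank2_of_proportional).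
- by rewrite mukai_H0l /mdeg /= oppr0.
- by rewrite mukai_H4l /mrank /= oppr0.
- by rewrite mukai_H0l mukai_H4l /mdeg /mrank /= mulrNN mulr1 oner_neq0.
- by rewrite mukai_H0l /mdeg /= oppr0.
- by rewrite mukai_H4l /mrank /= oppr0.
- by rewrite mukaiC // mukai_H0l /mdeg /= oppr0.
- by rewrite mukaiC // mukai_H4l /mrank /= oppr0.
Qed.

End SphericalClass.

Lemma sqr_gap (X Y : int) :
  0 <= X -> 0 <= Y -> X ^+ 2 != Y ^+ 2 -> X <= `|Y ^+ 2 - X ^+ 2|.
Proof.
move=> X_ge0 Y_ge0; rewrite subr_sqr normrM eq_sym -subr_eq0 subr_sqr mulf_eq0.
rewrite negb_or => /andP[YX_neq0 _].
have : 0 < `|Y - X| by rewrite normr_gt0.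
by rewrite [`|Y + X|]ger0_norm ?addr_ge0 //; nia.
Qed.

Lemma shift_not_square (U B T P c : int) :
  0 < U -> 2 * U = c ^+ 2 -> U * T != B ^+ 2 ->
  2 * `|B| + `|T| + 4 * `|U * T - B ^+ 2| < P ->
  0 < P ^+ 2 * U + 2 * P * B + T /\
  ~ is_int_square (2 * (P ^+ 2 * U + 2 * P * B + T)).
Proof.
rewrite -subr_eq0; set D := U * T - B ^+ 2 => U_gt0 Uc D_neq0 P_big.
have B_ge : - `|B| <= B by rewrite lerNnormlW.
have T_ge : - `|T| <= T by rewrite lerNnormlW.
have P_le_UP : P <= U * P by rewrite ler_peMl //; lia.
split.
  have : P * P <= P ^+ 2 * U by rewrite expr2 ler_peMr ?mulr_ge0 //; lia.
  have : - (P * `|B|) <= P * B by rewrite -mulrN ler_wpM2l //; lia.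
  have : `|T| <= P * `|T| by rewrite ler_peMl //; lia.
  clear -P_big B_ge T_ge; nia.
move=> [k Vk].
set X := 2 * U * P + 2 * B.
have ckX : `|c * k| ^+ 2 = X ^+ 2 + 4 * D.
  by rewrite real_normK ?num_real // exprMn -Uc -Vk /X /D; ring.
clearbody D; have X_gt : 4 * `|D| < X.
  by rewrite /X; move: P_big P_le_UP B_ge; clear; lia.
clearbody X; have X_ge0 : 0 <= X by apply: le_trans (ltW X_gt); rewrite mulr_ge0.
have sqr_neq : X ^+ 2 != `|c * k| ^+ 2 by rewrite ckX; move: D_neq0; clear; lia.
have := sqr_gap X_ge0 (normr_ge0 _) sqr_neq.
rewrite ckX addrAC subrr add0r normrM (ger0_norm (_ : 0 <= 4)) //.
by move: X_gt; clear; lia.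
Qed.

Lemma exists_int_gt (R : realType) (m : int) (r : R) :
  exists P : int, m < P /\ r < P%:~R.
Proof.
exists (Num.max m (Num.ceil r) + 1); split; first by rewrite ltzD1 le_max lexx.
by apply: le_lt_trans (ceil_ge r) _; rewrite ltr_int ltzD1 le_max lexx orbT.
Qed.

Section MukaiNorm.
Variables (R : realType) (n : nat).
Implicit Types (a : R) (v w x y : mvec R n).

Definition mnorm v : R := `|mrank v| + \sum_i `|mdiv v 0 i| + `|mdeg v|.

Lemma mnorm_ge0 v : 0 <= mnorm v.
Proof. by rewrite /mnorm !addr_ge0 ?sumr_ge0. Qed.

Lemma mnorm_coord_le v :
  [/\ `|mrank v| <= mnorm v, forall i, `|mdiv v 0 i| <= mnorm v & `|mdeg v| <= mnorm v].
Proof.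
have S_ge0 : 0 <= \sum_i `|mdiv v 0 i| by rewrite sumr_ge0.
have := normr_ge0 (mrank v); have := normr_ge0 (mdeg v).
split; rewrite /mnorm; [lra | move=> i | lra].
rewrite (bigD1 i) //=; have : 0 <= \sum_(j | j != i) `|mdiv v 0 j| by rewrite sumr_ge0.
lra.
Qed.

Lemma mnormD v w : mnorm (v + w) <= mnorm v + mnorm w.
Proof.
rewrite /mnorm /mrank /mdiv /mdeg /=.
have : \sum_i `|(v.1.2 + w.1.2) 0 i| <= \sum_i `|v.1.2 0 i| + \sum_i `|w.1.2 0 i|.
  by rewrite -big_split ler_sum // => i _; rewrite mxE ler_normD.
have := ler_normD v.1.1 w.1.1; have := ler_normD v.2 w.2; lra.
Qed.

Lemma mnormZ a v : mnorm (a *: v) = `|a| * mnorm v.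
Proof.
rewrite /mnorm /mrank /mdiv /mdeg /=.
rewrite -[a *: (v.1.1 : R^o)]/(a * _) -[a *: (v.2 : R^o)]/(a * _) !normrM !mulrDr mulr_sumr.
by congr (_ + _ + _); apply: eq_bigr => i _; rewrite mxE normrM.
Qed.

Lemma mclose_mnorm eps v w : mnorm (v - w) < eps -> mclose eps v w.
Proof.
have [le_r le_c le_m] := mnorm_coord_le (v - w) => lt_eps.
split; [exact: le_lt_trans le_r lt_eps | move=> i | exact: le_lt_trans le_m lt_eps].
by apply: le_lt_trans lt_eps; have := le_c i; rewrite /mdiv /= !mxE.
Qed.

Lemma mukai_bounded (G : 'M[R]_n) :
  exists2 C, 0 <= C & forall v w, `|mukai G v w| <= C * mnorm v * mnorm w.
Proof.
exists (\sum_j \sum_i `|G i j| + 2).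
  by rewrite addr_ge0 ?sumr_ge0 // => j _; rewrite sumr_ge0.
move=> v w; have [vr vc vm] := mnorm_coord_le v; have [wr wc wm] := mnorm_coord_le w.
have v_ge0 := mnorm_ge0 v; have w_ge0 := mnorm_ge0 w.
have NS_le : `|(mdiv v *m G *m (mdiv w)^T) 0 0|
    <= (\sum_j \sum_i `|G i j|) * mnorm v * mnorm w.
  rewrite mxE (le_trans (ler_norm_sum _ _ _)) // -mulrA mulr_suml.
  apply: ler_sum => j _; rewrite mxE normrM mulr_suml.
  rewrite (le_trans (ler_pM _ _ (ler_norm_sum _ _ _) (le_refl _))) //.
  rewrite mulr_suml; apply: ler_sum => i _; rewrite mxE normrM.
  by rewrite [`|mdiv v 0 i| * _]mulrC -mulrA ler_wpM2l // ler_pM.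
have rm : `|mrank v * mdeg w| <= mnorm v * mnorm w by rewrite normrM ler_pM.
have mr : `|mrank w * mdeg v| <= mnorm v * mnorm w by rewrite normrM mulrC ler_pM.
rewrite /mukai (le_trans (ler_normB _ _)) //.
rewrite (le_trans (lerD (ler_normB _ _) (le_refl _))) // !mulrDl; lra.
Qed.

Lemma mukai_sqr_gt0_near (G : 'M[R]_n) x : G^T = G -> 0 < mukai G x x ->
  exists2 d, 0 < d & forall y, mnorm (y - x) < d -> 0 < mukai G y y.
Proof.
move=> symG xx; have [C C_ge0 bound] := mukai_bounded G.
have x_ge0 := mnorm_ge0 x.
pose K := C * (2 * mnorm x + 1) + 1.
have K_gt0 : 0 < K by rewrite /K ltr_wpDl ?mulr_ge0 //; lra.
exists (Num.min 1 (mukai G x x / K)) => [|y]; first by rewrite lt_min ltr01 divr_gt0.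
rewrite lt_min => /andP[]; rewrite ltr_pdivlMr //; set e := y - x => e_lt1 e_lt.
have -> : y = x + e by rewrite /e addrC subrK.
have e_ge0 := mnorm_ge0 e.
have := bound x e; have := bound e e; rewrite !ler_norml => /andP[ee _] /andP[xe _].
have : C * mnorm e * mnorm e <= C * mnorm e by rewrite ler_piMr ?mulr_ge0 // ltW.
rewrite mukai_sqrD // /K in e_lt *; lra.
Qed.

Lemma mnorm_perp2_le (G : 'M[R]_n) s :
  exists2 K, 0 <= K & forall z, mnorm (perp2 G s z) <= K * mnorm z.
Proof.
have [C C_ge0 bound] := mukai_bounded G; have s_ge0 := mnorm_ge0 s.
exists (2 + C * mnorm s * mnorm s) => [|z]; first by rewrite addr_ge0 ?mulr_ge0.
apply: le_trans (mnormD _ _) _; rewrite !mnormZ normr_nat.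
have : `|mukai G z s| * mnorm s <= C * mnorm z * mnorm s * mnorm s.
  by rewrite ler_wpM2r.
lra.
Qed.

Definition mfloor x : mvec int n :=
  (Num.floor (mrank x), map_mx Num.floor (mdiv x), Num.floor (mdeg x)).

Lemma mnorm_mfloor_sub x : mnorm (mreal R (mfloor x) - x) <= n.+2%:R.
Proof.
have floor_sub a : `|(Num.floor a)%:~R - a| <= 1.
  have := floor_le a; have := floorD1_gt a; rewrite intrD ler_norml => *.
  by apply/andP; split; lra.
have : \sum_i `|mdiv (mreal R (mfloor x) - x) 0 i| <= \sum_(i < n) 1.
  by apply: ler_sum => i _; rewrite /mdiv /= !mxE floor_sub.
rewrite sumr_const card_ord -[n.+2]addn2 natrD /mnorm.
have := floor_sub (mrank x); have := floor_sub (mdeg x); rewrite /mrank /mdeg /=; lra.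
Qed.

End MukaiNorm.

Lemma hyperbolic_signature_neq0 (R : realType) n (G : 'M[int]_n) :
  (0 < n)%N -> hyperbolic_signature R G -> G != 0.
Proof.
move=> n_gt0 [P [_ PGP]]; apply/eqP => G0; move: PGP.
rewrite G0 map_mx0 mulmx0 mul0mx => /matrixP/(_ (Ordinal n_gt0) (Ordinal n_gt0)).
by rewrite !mxE eqxx /= mulr1n => /eqP; rewrite eq_sym oner_eq0.
Qed.

Section IntegralClasses.
Variables (R : realType) (n : nat) (G : 'M[int]_n).
Local Notation GR := (map_mx (fun z : int => z%:~R : R) G).
Implicit Types (s t u v w : mvec int n).

Lemma mrealD v w : mreal R (v + w) = mreal R v + mreal R w.
Proof. by rewrite /mreal /mrank /mdiv /mdeg /= map_mxD !intrD. Qed.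

Lemma mrealZ (a : int) v : mreal R (a *: v) = a%:~R *: mreal R v.
Proof. by rewrite /mreal /mrank /mdiv /mdeg /= map_mxZ !intrM. Qed.

Lemma mukai_mreal v w : mukai GR (mreal R v) (mreal R w) = (mukai G v w)%:~R.
Proof. by rewrite /mukai /mreal /= map_trmx -!map_mxM mxE !rmorphB !rmorphM. Qed.

Lemma mreal_perp2 s w : mreal R (perp2 G s w) = perp2 GR (mreal R s) (mreal R w).
Proof. by rewrite /perp2 mrealD !mrealZ mukai_mreal. Qed.

Lemma integral_approx s x eta :
  mukai G s s = -2 -> mukai GR x (mreal R s) = 0 -> 0 < eta ->
  exists u (lam : R), [/\ mukai G u s = 0, 0 < lam & mnorm (lam *: mreal R u - x) < eta].
Proof.
move=> ss xs eta_gt0; have [K K_ge0 perp2_le] := mnorm_perp2_le GR (mreal R s).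
have Kn_ge0 : 0 <= K * n.+2%:R by rewrite mulr_ge0.
pose N := K * n.+2%:R / eta + 1.
have N_gt0 : 0 < N by rewrite /N; have := divr_ge0 Kn_ge0 (ltW eta_gt0); lra.
pose w := mfloor (N *: x).
exists (perp2 G s w), (2 * N)^-1; split; first exact: mukai_perp2l.
  by rewrite invr_gt0 mulr_gt0.
have -> : (2 * N)^-1 *: mreal R (perp2 G s w) - x
    = (2 * N)^-1 *: perp2 GR (mreal R s) (mreal R w - N *: x).
  rewrite mreal_perp2 linearB linearZ /= (perp2_orth xs) scalerBr; congr (_ - _).
  by rewrite !scalerA -mulrA [N * 2]mulrC mulVf ?scale1r // mulf_neq0 ?lt0r_neq0.
rewrite mnormZ ger0_norm ?invr_ge0 ?mulr_ge0 ?ltW //.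
apply: le_lt_trans (ler_wpM2l _ (perp2_le _)) _; first by rewrite invr_ge0 mulr_ge0 ?ltW.
apply: le_lt_trans (ler_wpM2l _ (ler_wpM2l K_ge0 (mnorm_mfloor_sub _))) _.
  by rewrite invr_ge0 mulr_ge0 ?ltW.
rewrite mulrC ltr_pdivrMr ?mulr_gt0 //.
have -> : eta * (2 * N) = 2 * (K * n.+2%:R) + 2 * eta.
  by rewrite /N; field; rewrite lt0r_neq0.
lra.
Qed.

Hypothesis symG : G^T = G.

Lemma positive_integral_approx s x eta :
  mukai G s s = -2 -> mukai GR x (mreal R s) = 0 -> 0 < mukai GR x x -> 0 < eta ->
  exists u (lam : R), [/\ mukai G u s = 0, 0 < mukai G u u, 0 < lam
    & mnorm (lam *: mreal R u - x) < eta].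
Proof.
move=> ss xs xx eta_gt0; have symGR : GR^T = GR by rewrite map_trmx symG.
have [d d_gt0 near_pos] := mukai_sqr_gt0_near symGR xx.
have [|u [lam [us lam_gt0 ux]]] := integral_approx (eta := Num.min eta d) ss xs.
  by rewrite lt_min eta_gt0.
move: ux; rewrite lt_min => /andP[ux_eta ux_d].
exists u, lam; split => //.
move: (near_pos _ ux_d); rewrite mukaiZl mukaiZr mukai_mreal !pmulr_rgt0 //.
by rewrite ltr0z.
Qed.

Lemma non_square_approx s u t (lam eta : R) :
  mukai G u s = 0 -> 0 < mukai G u u -> is_int_square (2 * mukai G u u) ->
  mukai G t s = 0 -> mukai G u u * mukai G t t != mukai G u t ^+ 2 ->
  0 < lam -> 0 < eta ->
  exists v (mu : R), [/\ mukai G v s = 0, 0 < mukai G v v,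
    ~ is_int_square (2 * mukai G v v), 0 < mu
    & mnorm (mu *: mreal R v - lam *: mreal R u) < eta].
Proof.
move=> us uu [c uc] ts ut lam_gt0 eta_gt0.
set U := mukai G u u in uu uc ut; set B := mukai G u t in ut.
set T := mukai G t t in ut.
have [P [P_big P_gt]] := exists_int_gt (2 * `|B| + `|T| + 4 * `|U * T - B ^+ 2|)
  (lam * mnorm (mreal R t) / eta).
have P_gt0 : 0 < P by move: P_big; clear; lia.
have PR_gt0 : 0 < P%:~R :> R by rewrite ltr0z.
have vv : mukai G (P *: u + t) (P *: u + t) = P ^+ 2 * U + 2 * P * B + T.
  by rewrite mukai_sqrD // !(mukaiZl, mukaiZr); ring.
have [vv_gt0 vv_nsq] := shift_not_square uu uc ut P_big.
exists (P *: u + t), (lam / P%:~R); rewrite vv; split => //.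
- by rewrite mukaiDl mukaiZl us ts mulr0 add0r.
- by rewrite divr_gt0.
rewrite mrealD mrealZ scalerDr scalerA divfK ?lt0r_neq0 // addrC addKr mnormZ.
rewrite ger0_norm ?divr_ge0 ?ltW // mulrAC ltr_pdivrMr //.
by rewrite [eta * _]mulrC -ltr_pdivrMr.
Qed.

End IntegralClasses.

Theorem lemmaA3 (R : realType) (n : nat) (G : 'M[int]_n) :
  (0 < n <= 20)%N ->
  even_lattice G ->
  hyperbolic_signature R G ->
  forall s : mvec int n, mukai G s s = -2 ->
  forall x : mvec R n,
    mukai (map_mx (fun z : int => z%:~R) G) x (mreal R s) = 0 ->
    0 < mukai (map_mx (fun z : int => z%:~R) G) x x ->
  forall eps : R, 0 < eps ->
  exists (v : mvec int n) (lam : R),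
    [/\ mukai G v s = 0,
        0 < mukai G v v,
        ~ is_int_square (2 * mukai G v v),
        0 < lam
      & mclose eps (mscale lam (mreal R v)) x].
Proof.
move=> /andP[n_gt0 _] [symG _] hyp s ss x xs xx eps eps_gt0.
have eps2_gt0 : 0 < eps / 2 by rewrite divr_gt0.
have [u [lam [us uu lam_gt0 ux]]] := positive_integral_approx symG ss xs xx eps2_gt0.
have close_to_u v mu : mnorm (mu *: mreal R v - lam *: mreal R u) < eps / 2 ->
    mclose eps (mscale mu (mreal R v)) x.
  move=> vu; apply: mclose_mnorm; rewrite -(subrKA (lam *: mreal R u)).
  by apply: le_lt_trans (mnormD _ _) _; lra.
have [u_sq | u_nsq] := classic (is_int_square (2 * mukai G u u)); last first.
  exists u, lam; split => //; apply: close_to_u.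
  by rewrite subrr -(scale0r 0) mnormZ normr0 mul0r.
have [t ts ut] :
    exists2 t, mukai G t s = 0 & mukai G u u * mukai G t t != mukai G u t ^+ 2.
  apply: NNPP => no_t; move/eqP: (hyperbolic_signature_neq0 n_gt0 hyp); apply.
  apply: (gram_eq0_of_proportional symG _ ss us) (lt0r_neq0 uu) => // t ts.
  by apply/eqP; case: eqP => // /eqP ut; case: no_t; exists t.
have [v [mu [vs vv v_nsq mu_gt0 vu]]] :=
  non_square_approx symG us uu u_sq ts ut lam_gt0 eps2_gt0.
by exists v, mu; split => //; apply: close_to_u.
Qed.
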